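(* Let $\mathcal{H}$ be a finite-dimensional complex Hilbert space and $k\ge 2$. (i) A bosonic pure state $\rho\in\mathbb{P}(\mathcal{H}^{\vee k})$ is entangled if and only if it does not lie in the range of the map $\operatorname{Seg}^\vee_k:\mathbb{P}\mathcal{H}\to\mathbb{P}(\mathcal{H}^{\vee k})$, $\rho_x\mapsto\rho_{x^{k}}$, where $x^k=x\vee\cdots\vee x=x\otimes\cdots\otimes x$ ($k$ factors). (ii) A fermionic pure state $\rho\in\mathbb{P}(\mathcal{H}^{\wedge k})$ is entangled if and only if it does not lie in the range of the map $\operatorname{Seg}^\wedge_k:(\mathbb{P}\mathcal{H})^{\times k}_\circ\to\mathbb{P}(\mathcal{H}^{\wedge k})$, $(\rho_{x_1},\dots,\rho_{x_k})\mapsto\rho_{x_1\wedge\cdots\wedge x_k}$. (iii) A mixed bosonic (resp. fermionic) state on $\mathcal{H}^{\vee k}$ (resp. $\mathcal{H}^{\wedge k}$) is entangled if and only if it lies outside the convex hull of the range of $\operatorname{Seg}^\vee_k$ (resp. $\operatorname{Seg}^\wedge_k$), where pure states are identified with rank-one orthogonal projectors.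
   Context: For $0\neq x$ in a Hilbert space, $\rho_x=|x\rangle\langle x|/\|x\|^2$; pure states on a Hilbert space $V$ are identified with $\mathbb{P}V$ via $x\mapsto\rho_x$. $\mathcal{H}^{\vee k}\subset\mathcal{H}^{\otimes k}$ (resp. $\mathcal{H}^{\wedge k}$) is the subspace of totally symmetric (resp. antisymmetric) tensors, with $f_1\vee\cdots\vee f_k=\frac{1}{k!}\sum_{\sigma\in S_k}f_{\sigma(1)}\otimes\cdots\otimes f_{\sigma(k)}$ and $f_1\wedge\cdots\wedge f_k=\frac{1}{k!}\sum_{\sigma}(-1)^\sigma f_{\sigma(1)}\otimes\cdots\otimes f_{\sigma(k)}$. $(\mathbb{P}\mathcal{H})^{\times k}_\circ=\{(\rho_{x_1},\dots,\rho_{x_k}): x_1\wedge\cdots\wedge x_k\neq0\}$. S-rank: for $u\in\mathcal{H}^{\otimes k}$, the contraction $\imath_\nu u$ with $\nu\in\mathcal{H}^{\otimes(k-1)}$ is the linear extension of $\imath_{g_1\otimes\cdots\otimes g_{k-1}}(f_1\otimes\cdots\otimes f_k)=\prod_{i=1}^{k-1}\langle f_i|g_i\rangle\, f_k$; for $\sigma\in S_k$, $\sigma(f_1\otimes\cdots\otimes f_k)=f_{\sigma(1)}\otimes\cdots\otimes f_{\sigma(k)}$. The S-rank of $u$ is the maximum over $\sigma\in S_k$ of $\dim\{\imath_\nu\sigma(u):\nu\in\mathcal{H}^{\otimes(k-1)}\}$. A simple symmetric (resp. antisymmetric) tensor is a nonzero element of $\mathcal{H}^{\vee k}$ (resp.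 $\mathcal{H}^{\wedge k}$) of minimal S-rank among nonzero elements of that space. A bosonic (fermionic) pure state $\rho_x$, $0\ne x\in\mathcal{H}^{\vee k}$ (resp. $\mathcal{H}^{\wedge k}$), is simple if $x$ is a simple symmetric (resp. antisymmetric) tensor, and entangled otherwise; a mixed bosonic (fermionic) state is simple if it is a convex combination of simple bosonic (fermionic) pure states, and entangled otherwise. *)

From HB Require Import structures.
From mathcomp Require Import all_boot all_order all_fingroup all_algebra.
From Stdlib Require Import ClassicalEpsilon.
Set Implicit Arguments. Unset Strict Implicit. Unset Printing Implicit Defensive.
Import Order.TTheory GRing.Theory Num.Theory.
Local Open Scope ring_scope.

(* The Hilbert space H = C^n, vectors are row vectors 'rV[C]_n, with the
   inner product <f|g> = \sum_a f_a (g_a)^* .  C is any numClosedFieldType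
   (e.g. the complex numbers). *)

Notation midx n k := {ffun 'I_k -> 'I_n}.

(* tensors in H^{(x)k}, written in the product basis *)
Notation tensor C n k := {ffun midx n k -> C^o}.

(* operators on H^{(x)k}, as matrices indexed by pairs of multi-indices *)
Notation op C n k := {ffun (midx n k * midx n k)%type -> C^o}.

Section Defs.
Variables (C : numClosedFieldType) (n k : nat).

Definition tprod (f : 'I_k -> 'rV[C]_n) : tensor C n k :=
  [ffun a : midx n k => \prod_(i < k) f i 0 (a i)].

Definition xpow (x : 'rV[C]_n) : tensor C n k := tprod (fun _ => x).

Definition wedge (f : 'I_k -> 'rV[C]_n) : tensor C n k :=
  (k`!%:R)^-1 *: \sum_(s : 'S_k) ((-1) ^+ odd_perm s) *: tprod (fun i => f (s i)).

(* s (f_1 (x) ... (x) f_k) = f_{s 1} (x) ... (x) f_{s k}, extended linearly *)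
Definition permT (s : 'S_k) (u : tensor C n k) : tensor C n k :=
  [ffun a : midx n k => u [ffun i => a ((s^-1)%g i)]].

Definition symmetric (u : tensor C n k) : Prop := forall s, permT s u = u.
Definition antisymmetric (u : tensor C n k) : Prop :=
  forall s, permT s u = ((-1) ^+ odd_perm s) *: u.

(* the multi-index (a_1,...,a_{k-1},j) *)
Definition join (a : midx n k.-1) (j : 'I_n) : midx n k :=
  [ffun i : 'I_k => if (insub (val i) : option 'I_k.-1) is Some i' then a i' else j].

(* contraction i_nu u, the linear extension of
   i_{g_1(x)..(x)g_{k-1}} (f_1(x)..(x)f_k) = \prod_i <f_i|g_i> f_k *)
Definition contr (nu : tensor C n k.-1) (u : tensor C n k) : 'rV[C]_n :=
  \row_j \sum_(a : midx n k.-1) u (join a j) * (nu a)^*.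

Definition pb (P : Prop) : bool := if excluded_middle_informative P then true else false.

Definition dimS (S : 'rV[C]_n -> Prop) : nat :=
  \max_(m < n.+1 | pb (exists t : m.-tuple 'rV[C]_n, (forall i, S (tnth t i)) /\ free t)) m.

Definition srank (u : tensor C n k) : nat :=
  \max_(s : 'S_k) dimS (fun w => exists nu : tensor C n k.-1, w = contr nu (permT s u)).

Definition simple_sym (u : tensor C n k) : Prop :=
  [/\ symmetric u, u != 0 &
      forall v, symmetric v -> v != 0 -> (srank u <= srank v)%N].

Definition simple_antisym (u : tensor C n k) : Prop :=
  [/\ antisymmetric u, u != 0 &
      forall v, antisymmetric v -> v != 0 -> (srank u <= srank v)%N].

Definition rho (x : tensor C n k) : op C n k :=
  [ffun p : midx n k * midx n k =>
     x p.1 * (x p.2)^* / \sum_(a : midx n k) x a * (x a)^*].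

Definition boson_pure (r : op C n k) : Prop :=
  exists y, [/\ symmetric y, y != 0 & r = rho y].
Definition fermion_pure (r : op C n k) : Prop :=
  exists y, [/\ antisymmetric y, y != 0 & r = rho y].
Definition simple_boson_pure (r : op C n k) : Prop :=
  exists y, simple_sym y /\ r = rho y.
Definition simple_fermion_pure (r : op C n k) : Prop :=
  exists y, simple_antisym y /\ r = rho y.

Definition seg_sym_range (r : op C n k) : Prop :=
  exists x : 'rV[C]_n, x != 0 /\ r = rho (xpow x).
Definition seg_wedge_range (r : op C n k) : Prop :=
  exists f : 'I_k -> 'rV[C]_n, wedge f != 0 /\ r = rho (wedge f).

Definition apply_op (r : op C n k) (v : tensor C n k) : tensor C n k :=
  [ffun a => \sum_(b : midx n k) r (a, b) * v b].
Definition psd (r : op C n k) : Prop :=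
  forall v : tensor C n k, 0 <= \sum_(a : midx n k) (v a)^* * apply_op r v a.
Definition trace1 (r : op C n k) : Prop := \sum_(a : midx n k) r (a, a) = 1.
(* density operators on H^{vee k} (resp. H^{wedge k}), seen inside H^{(x)k} *)
Definition boson_mixed (r : op C n k) : Prop :=
  [/\ psd r, trace1 r & forall v, symmetric (apply_op r v)].
Definition fermion_mixed (r : op C n k) : Prop :=
  [/\ psd r, trace1 r & forall v, antisymmetric (apply_op r v)].

Definition conv (S : op C n k -> Prop) (r : op C n k) : Prop :=
  exists (m : nat) (c : 'I_m -> C) (p : 'I_m -> op C n k),
    [/\ forall i, 0 <= c i, \sum_i c i = 1, forall i, S (p i)
      & r = \sum_i c i *: p i].

End Defs.

From Pilot Require Import Defs.
From HB Require Import structures.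
From mathcomp Require Import all_boot all_order all_fingroup all_algebra.
From Stdlib Require Import ClassicalEpsilon.
Set Implicit Arguments. Unset Strict Implicit. Unset Printing Implicit Defensive.
Import Order.TTheory GRing.Theory Num.Theory.
Local Open Scope ring_scope.

(* Write k = k'.+1.  For a tensor u, the contractions i_nu u are exactly the
   linear combinations of the "slices" j |-> u(a_1,...,a_{k'},j), so they form
   the subspace [cspace u] and the S-rank of u is the maximum of
   \dim (cspace (permT s u)).  For symmetric and antisymmetric u all these
   spaces coincide, so srank u = \dim (cspace u); moreover every "line"
   j |-> u(c with c_i replaced by j) lies in cspace u.
   The key tool is a family X_1..X_m in H which is biorthogonal to a family of
   coordinates g_1..g_m (X_l(g_l') = e [l = l'], e != 0): such a family is free,
   and a tensor whose lines all lie in its span is determined by its values on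
   the multi-indices with entries among the g_l ([rigidity]).
   A nonzero symmetric (antisymmetric) tensor contains such a family of size 1
   (size k) among its lines, hence has S-rank >= 1 (>= k), with equality for
   x^k (x_1 /\ ... /\ x_k).  A minimal-rank tensor y therefore has cspace y equal
   to the span of that family, and rigidity identifies y with a multiple of x^k
   (of a wedge).  Since rho is invariant under scaling, the simple pure states
   are exactly the ranges of Seg, and (iii) follows by taking convex hulls. *)

Lemma pbP (P : Prop) : pb P <-> P.
Proof. by rewrite /pb; case: excluded_middle_informative. Qed.

Lemma row_nz (C : numClosedFieldType) (n : nat) (x : 'rV[C]_n) :
  x != 0 -> exists j, x 0 j != 0.
Proof.
move=> hx; apply/existsP; apply: contraNT hx; rewrite negb_exists => /forallP H.
by apply/eqP/rowP => j; rewrite !mxE; apply/eqP; rewrite -[_ == _]negbK H.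
Qed.

Lemma tensor_nz (C : numClosedFieldType) (n k : nat) (u : tensor C n k) :
  u != 0 -> exists c, u c != 0.
Proof.
move=> hu; apply/existsP; apply: contraNT hu; rewrite negb_exists => /forallP H.
by apply/eqP/ffunP => c; rewrite ffunE; apply/eqP; rewrite -[_ == _]negbK H.
Qed.

Lemma scaleTE (C : numClosedFieldType) (n k : nat) (a : C) (u : tensor C n k) c :
  (a *: u) c = a * u c.
Proof. by rewrite ffunE. Qed.

Lemma rhoZ (C : numClosedFieldType) (n k : nat) (lam : C) (y : tensor C n k) :
  lam != 0 -> rho (lam *: y) = rho y.
Proof.
move=> hl; apply/ffunP => p; rewrite !ffunE.
have E (a b : C) : (lam *: (a : C^o)) * (lam *: (b : C^o))^* = (lam * lam^*) * (a * b^*).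
  by rewrite /GRing.scale /= rmorphM mulrACA.
rewrite E (eq_bigr (fun a => (lam * lam^*) * (y a * (y a)^*))) => [|a _]; last first.
  by rewrite ffunE E.
by rewrite -mulr_sumr invfM mulrACA divff ?mul1r // mul_conjC_eq0.
Qed.

Section Biorthogonal.
Variables (C : numClosedFieldType) (n : nat).

Definition spanF m (F : 'I_m -> 'rV[C]_n) : {vspace 'rV[C]_n} :=
  <<[tuple F i | i < m]>>%VS.

Lemma memF m (F : 'I_m -> 'rV[C]_n) i : F i \in spanF F.
Proof. by apply: memv_span; rewrite -(tnth_mktuple F i) mem_tnth. Qed.

Lemma nth_family m (F : 'I_m -> 'rV[C]_n) (i : 'I_m) : [tuple F i | i < m]`_i = F i.
Proof. by rewrite -tnth_nth tnth_mktuple. Qed.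

Definition biorth m (X : 'I_m -> 'rV[C]_n) (g : 'I_m -> 'I_n) (e : C) : Prop :=
  forall l l', X l 0 (g l') = if l == l' then e else 0.

Variables (m : nat) (X : 'I_m -> 'rV[C]_n) (g : 'I_m -> 'I_n) (e : C).
Hypotheses (hX : biorth X g e) (he : e != 0).

Lemma biorth_coef (a : 'I_m -> C) l :
  (\sum_i a i *: X i) 0 (g l) = a l * e.
Proof.
rewrite summxE (bigD1 l) //= big1 => [|i hi]; last by rewrite mxE hX (negbTE hi) mulr0.
by rewrite mxE hX eqxx addr0.
Qed.

Lemma biorth_free : free [tuple X i | i < m].
Proof.
apply/freeP => a ha l; have := congr1 (fun w : 'rV_n => w 0 (g l)) ha.
under eq_bigr do rewrite nth_family.
by rewrite biorth_coef mxE => /eqP; rewrite mulf_eq0 (negbTE he) orbF => /eqP.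
Qed.

Lemma dim_spanF : \dim (spanF X) = m.
Proof. by have := biorth_free; rewrite /free size_tuple => /eqP. Qed.

Lemma biorth_expand w : w \in spanF X ->
  w = \sum_l (w 0 (g l) / e) *: X l.
Proof.
move/coord_span => Ew.
suff coefE l : coord [tuple X i | i < m] l w = w 0 (g l) / e.
  by rewrite {1}Ew; apply: eq_bigr => l _; rewrite coefE nth_family.
have := congr1 (fun v : 'rV_n => v 0 (g l)) Ew; under eq_bigr do rewrite nth_family.
by rewrite /= biorth_coef => ->; rewrite mulfK.
Qed.

End Biorthogonal.

Section Contraction.
Variables (C : numClosedFieldType) (n k' : nat).
Local Notation k := k'.+1.
Local Notation T := (tensor C n k).

Definition slice (u : T) (a : midx n k') : 'rV[C]_n := \row_j u (@join n k a j).
Definition cspace (u : T) : {vspace 'rV[C]_n} := (\sum_(a : midx n k') <[slice u a]>)%VS.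

Lemma contr_slice (nu : tensor C n k') (u : T) :
  @contr C n k nu u = \sum_a (nu a)^* *: slice u a.
Proof.
apply/rowP => j; rewrite !mxE summxE; apply: eq_bigr => a _.
by rewrite !mxE mulrC.
Qed.

Lemma mem_cspace w (u : T) :
  (exists nu : tensor C n k', w = @contr C n k nu u) <-> w \in cspace u.
Proof.
split=> [[nu ->]|].
  rewrite contr_slice; apply: memv_sumr => a _.
  by rewrite memvZ // memv_line.
case/memv_sumP => vs Hvs ->.
have Hc a : exists c, vs a = c *: slice u a by apply/vlineP; exact: Hvs.
pose c a := proj1_sig (constructive_indefinite_description _ (Hc a)).
exists [ffun a => (c a)^*]; rewrite contr_slice; apply: eq_bigr => a _.
by rewrite ffunE conjCK (proj2_sig (constructive_indefinite_description _ (Hc a))).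
Qed.

Lemma dimS_vspace (V : {vspace 'rV[C]_n}) (S : 'rV[C]_n -> Prop) :
  (forall w, S w <-> w \in V) -> dimS S = \dim V.
Proof.
move=> HS; apply/eqP; rewrite eqn_leq; apply/andP; split.
  apply/bigmax_leqP => m /pbP [t [Ht fr]].
  rewrite -(size_tuple t) -(eqP fr) dimvS //.
  by apply/span_subvP => x /tnthP [i ->]; apply/HS.
have hd : (\dim V < n.+1)%N.
  by rewrite ltnS (leq_trans (dimvS (subvf V))) // dimvf /dim /= mul1n.
apply: (@leq_bigmax_cond _ _ (fun m : 'I_n.+1 => nat_of_ord m) (Ordinal hd)).
apply/pbP; exists (vbasis V); split; last exact: basis_free (vbasisP V).
by move=> i; apply/HS; apply: vbasis_mem; apply: mem_tnth.
Qed.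

Lemma srankE (u : T) : srank u = \max_(s : 'S_k) \dim (cspace (permT s u)).
Proof. by apply: eq_bigr => s _; apply: dimS_vspace => w; exact: mem_cspace. Qed.

Lemma slice_in (u : T) a : slice u a \in cspace u.
Proof. by rewrite memvE; apply: (sumv_sup a) => //; rewrite -memvE memv_line. Qed.

Lemma cspace_sub (u : T) (V : {vspace 'rV[C]_n}) :
  (forall a, slice u a \in V) -> (cspace u <= V)%VS.
Proof. by move=> H; apply/subv_sumP => a _; rewrite -memvE. Qed.

Lemma sliceZ (c : C) (u : T) a : slice (c *: u) a = c *: slice u a.
Proof. by apply/rowP => j; rewrite !mxE ffunE. Qed.

Lemma sliceB (u v : T) a : slice (u - v) a = slice u a - slice v a.
Proof. by apply/rowP => j; rewrite !mxE !ffunE. Qed.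

Lemma slice_sum (I : finType) (F : I -> T) a :
  slice (\sum_i F i) a = \sum_i slice (F i) a.
Proof.
by apply/rowP => j; rewrite mxE !summxE sum_ffunE; apply: eq_bigr => i _; rewrite mxE.
Qed.

Lemma cspaceZ (c : C) (u : T) : (cspace (c *: u) <= cspace u)%VS.
Proof. by apply: cspace_sub => a; rewrite sliceZ memvZ // slice_in. Qed.

Lemma cspaceB (u v : T) : (cspace (u - v) <= cspace u + cspace v)%VS.
Proof.
by apply: cspace_sub => a; rewrite sliceB memv_add ?memvN // slice_in.
Qed.

Lemma join_widen a j (i : 'I_k') : @join n k a j (widen_ord (leqnSn k') i) = a i.
Proof.
rewrite ffunE; case: insubP => [i' _ /= hv|]; last by rewrite /= ltn_ord.
by congr (a _); apply: val_inj.
Qed.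

Lemma join_max a j : @join n k a j ord_max = j.
Proof.
rewrite ffunE; case: insubP => [i' _ /= hv|] //.
by move: (ltn_ord i'); rewrite hv ltnn.
Qed.

Lemma slice_tprod (f : 'I_k -> 'rV[C]_n) a :
  slice (tprod f) a = (\prod_(i < k') f (widen_ord (leqnSn k') i) 0 (a i)) *: f ord_max.
Proof.
apply/rowP => j; rewrite !mxE ffunE big_ord_recr /= join_max.
by congr (_ * _); apply: eq_bigr => i _; rewrite join_widen.
Qed.

Definition upd (c : midx n k) (i : 'I_k) (j : 'I_n) : midx n k :=
  [ffun l => if l == i then j else c l].
Definition line (u : T) (c : midx n k) (i : 'I_k) : 'rV[C]_n := \row_j u (upd c i j).

Lemma upd_id (c : midx n k) i : upd c i (c i) = c.
Proof. by apply/ffunP => l; rewrite ffunE; case: eqP => [->|]. Qed.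

Lemma line_at (u : T) c i : line u c i 0 (c i) = u c.
Proof. by rewrite mxE upd_id. Qed.

Lemma ord_widen (l : 'I_k) :
  l != ord_max -> exists i : 'I_k', l = widen_ord (leqnSn k') i.
Proof.
move=> hl; have hl' : (l < k')%N.
  rewrite ltn_neqAle -ltnS ltn_ord andbT; apply: contra hl => /eqP h.
  by apply/eqP; apply: val_inj.
by exists (Ordinal hl'); apply: val_inj.
Qed.

(* A line in direction i is a slice of u with the factors i and k swapped. *)
Lemma line_in_permT (u : T) c i : line u c i \in cspace (permT (tperm i ord_max) u).
Proof.
set t := tperm i ord_max.
pose a : midx n k' := [ffun i' => c (t (widen_ord (leqnSn k') i'))].
suff -> : line u c i = slice (permT t u) a by apply: slice_in.
apply/rowP => j; rewrite !mxE ffunE; congr (u _); apply/ffunP => l.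
rewrite [RHS]ffunE tpermV /upd ffunE; case: eqP => [->|/eqP hli].
  by rewrite /t tpermL join_max.
have : t l != ord_max.
  by apply: contra hli => /eqP h; apply/eqP; apply: (@perm_inj _ t); rewrite h /t tpermL.
by case/ord_widen => i' hi'; rewrite hi' join_widen ffunE -hi' /t tpermK.
Qed.

Lemma permT1 (u : T) : permT 1 u = u.
Proof.
apply/ffunP => c; rewrite ffunE; congr (u _).
by apply/ffunP => i; rewrite ffunE invg1 perm1.
Qed.

Lemma permTB (s : 'S_k) (u v : T) : permT s (u - v) = permT s u - permT s v.
Proof. by apply/ffunP => c; rewrite !ffunE. Qed.

Lemma permTZ (s : 'S_k) (a : C) (u : T) : permT s (a *: u) = a *: permT s u.
Proof. by apply/ffunP => c; rewrite !ffunE. Qed.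

Lemma antisymZ (a : C) (u : T) : Defs.antisymmetric u -> Defs.antisymmetric (a *: u).
Proof. by move=> hu s; rewrite permTZ hu !scalerA mulrC. Qed.

Definition perm_stable (u : T) : Prop := forall s, cspace (permT s u) = cspace u.

Lemma sym_stable (u : T) : Defs.symmetric u -> perm_stable u.
Proof. by move=> hu s; rewrite hu. Qed.

Lemma antisym_stable (u : T) : Defs.antisymmetric u -> perm_stable u.
Proof.
move=> hu s; rewrite hu; apply/eqP; rewrite eqEsubv cspaceZ /=.
have hsg : (-1) ^+ odd_perm s != 0 :> C by rewrite signr_eq0.
by rewrite -{1}(scalerK hsg u) cspaceZ.
Qed.

Lemma srank_stable (u : T) : perm_stable u -> srank u = \dim (cspace u).
Proof.
move=> hu; rewrite srankE; apply/eqP; rewrite eqn_leq; apply/andP; split.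
  by apply/bigmax_leqP => s _; rewrite hu.
by rewrite -{1}(permT1 u); exact: leq_bigmax.
Qed.

Lemma line_in_cspace (u : T) c i : perm_stable u -> line u c i \in cspace u.
Proof. by move=> hu; rewrite -(hu (tperm i ord_max)) line_in_permT. Qed.

Lemma srank_le_span (u : T) m (F : 'I_m -> 'rV[C]_n) :
  perm_stable u -> (cspace u <= spanF F)%VS -> (srank u <= m)%N.
Proof.
move=> hu hF; rewrite srank_stable //; apply: leq_trans (dimvS hF) _.
by apply: leq_trans (dim_span _) _; rewrite size_tuple.
Qed.

Section Rigidity.
Variables (m : nat) (X : 'I_m -> 'rV[C]_n) (g : 'I_m -> 'I_n) (e : C).
Hypotheses (hX : biorth X g e) (he : e != 0).

Lemma biorth_srank_lower (u : T) :
  perm_stable u -> (forall l, X l \in cspace u) -> (m <= srank u)%N.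
Proof.
move=> hu hXu; rewrite srank_stable // -{1}(dim_spanF hX he) dimvS //.
by apply/span_subvP => w /mapP [l _ ->].
Qed.

Lemma cspace_span (u : T) : perm_stable u -> (forall l, X l \in cspace u) ->
  (srank u <= m)%N -> cspace u = spanF X.
Proof.
move=> hu hXu hr; apply/eqP; rewrite eq_sym eqEdim (dim_spanF hX he).
rewrite -srank_stable // hr andbT.
by apply/span_subvP => w /mapP [l _ ->].
Qed.

(* A tensor whose lines lie in span X vanishes as soon as it vanishes on the
   multi-indices with entries in the range of g: each value d c is a
   combination of values at indices having one more entry in that range
   (biorth_expand), so induction on the number of entries outside it applies. *)
Lemma vanish_span (d : T) : (forall c i, line d c i \in spanF X) ->
  (forall c : midx n k, (forall i, c i \in codom g) -> d c = 0) -> d = 0.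
Proof.
move=> hline hcodom.
suff H N (c : midx n k) : (#|[pred i | c i \notin codom g]| <= N)%N -> d c = 0.
  by apply/ffunP => c; rewrite ffunE (H _ c (leqnn _)).
elim: N c => [|N IH] c hc.
  apply: hcodom => i; apply: contraTT hc => hi; rewrite -ltnNge.
  by apply/card_gt0P; exists i.
case: (pickP [pred i | c i \notin codom g]) => [i /= hi|hall]; last first.
  by apply: hcodom => i; have /negbFE := hall i.
rewrite -(line_at d c i) {1}(biorth_expand hX he (hline c i)) summxE.
apply: big1 => l _; rewrite mxE mxE IH ?mul0r ?mulr0 //.
rewrite -ltnS (leq_trans _ hc) // (cardD1 i [pred i | c i \notin codom g]).
rewrite inE /= hi add1n ltnS.
apply: subset_leq_card; apply/subsetP => x; rewrite !inE /upd ffunE.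
by case: eqP => [->|_ ->]; rewrite ?codom_f.
Qed.

Lemma rigidity (y z : T) : (cspace y <= spanF X)%VS -> (cspace z <= spanF X)%VS ->
  perm_stable (y - z) ->
  (forall c : midx n k, (forall i, c i \in codom g) -> y c = z c) -> y = z.
Proof.
move=> hy hz hst hag; apply/eqP; rewrite -subr_eq0; apply/eqP.
apply: vanish_span => [c i|c hc]; last by rewrite !ffunE hag // subrr.
apply: subvP (line_in_cspace c i hst); apply: subv_trans (cspaceB y z) _.
by rewrite subv_add hy hz.
Qed.

End Rigidity.

Lemma xpow_sym (x : 'rV[C]_n) : Defs.symmetric (xpow k x).
Proof.
move=> s; apply/ffunP => c; rewrite !ffunE (reindex_inj (@perm_inj _ s)) /=.
by apply: eq_bigr => i _; rewrite ffunE permK.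
Qed.

Lemma xpow_const (x : 'rV[C]_n) j : xpow k x [ffun=> j] = x 0 j ^+ k.
Proof.
rewrite ffunE (eq_bigr (fun _ => x 0 j)) ?prodr_const ?card_ord // => i _.
by rewrite ffunE.
Qed.

Lemma xpow_nz (x : 'rV[C]_n) : x != 0 -> xpow k x != 0.
Proof.
case/row_nz => j hj; apply/eqP => /ffunP/(_ [ffun=> j]).
by rewrite xpow_const ffunE => /eqP; rewrite expf_eq0 (negbTE hj) andbF.
Qed.

Lemma cspace_xpow (x : 'rV[C]_n) :
  (cspace (xpow k x) <= spanF (fun _ : 'I_1 => x))%VS.
Proof. by apply: cspace_sub => a; rewrite slice_tprod memvZ // (memF _ ord0). Qed.

Lemma srank_xpow (x : 'rV[C]_n) : (srank (xpow k x) <= 1)%N.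
Proof. exact: srank_le_span (sym_stable (@xpow_sym x)) (cspace_xpow x). Qed.

Lemma line_biorth1 (u : T) c :
  biorth (fun _ : 'I_1 => line u c ord_max) (fun _ => c ord_max) (u c).
Proof. by move=> l l'; rewrite !ord1 eqxx line_at. Qed.

Lemma srank_sym_pos (v : T) : Defs.symmetric v -> v != 0 -> (1 <= srank v)%N.
Proof.
move=> hs /tensor_nz [c hc]; have hst := sym_stable hs.
by apply: (biorth_srank_lower (line_biorth1 v c) hc hst) => l; exact: line_in_cspace.
Qed.

Lemma simple_xpow (x : 'rV[C]_n) : x != 0 -> simple_sym (xpow k x).
Proof.
move=> hx; split; [exact: xpow_sym | exact: xpow_nz |].
by move=> v hs hv; apply: leq_trans (srank_xpow x) (srank_sym_pos hs hv).
Qed.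

Lemma simple_sym_xpow (y : T) : simple_sym y ->
  exists x, x != 0 /\ exists lam, lam != 0 /\ y = lam *: xpow k x.
Proof.
case=> hs hy hmin; have [c hc] := tensor_nz hy.
have hst := sym_stable hs.
set x := line y c ord_max; set j0 := c ord_max.
have hX := line_biorth1 y c.
have hxj0 : x 0 j0 = y c := line_at y c ord_max.
have hx : x != 0 by apply: contraNneq hc => h; rewrite -hxj0 h mxE.
have hsp : cspace y = spanF (fun _ : 'I_1 => x).
  apply: (cspace_span hX hc hst) => [l|]; first exact: line_in_cspace.
  by apply: leq_trans (srank_xpow x); apply: hmin; [exact: xpow_sym | exact: xpow_nz].
have hx0 : x 0 j0 ^+ k != 0 by rewrite expf_neq0 // hxj0.
pose lam := y [ffun=> j0] / x 0 j0 ^+ k.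
have Ey : y = lam *: xpow k x.
  apply: (rigidity hX hc); first by rewrite hsp.
  - exact: subv_trans (cspaceZ _ _) (cspace_xpow x).
  - by apply: sym_stable => s; rewrite permTB permTZ hs xpow_sym.
  - move=> c' hc'; have -> : c' = [ffun=> j0].
      by apply/ffunP => i; rewrite ffunE; case/codomP: (hc' i).
    by rewrite scaleTE xpow_const divfK.
exists x; split => //; exists lam; split => //.
by apply: contraNneq hy => hl; rewrite Ey hl scale0r.
Qed.

Lemma wedgeE (f : 'I_k -> 'rV[C]_n) c :
  wedge f c = (k`!%:R)^-1 * \sum_(s : 'S_k) (-1) ^+ odd_perm s * \prod_i f (s i) 0 (c i).
Proof.
rewrite /wedge scaleTE sum_ffunE; congr (_ * _); apply: eq_bigr => s _.
by rewrite scaleTE ffunE.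
Qed.

Lemma wedge_antisym (f : 'I_k -> 'rV[C]_n) : Defs.antisymmetric (wedge f).
Proof.
move=> s; apply/ffunP => c; rewrite scaleTE ffunE !wedgeE mulrCA; congr (_ * _).
rewrite mulr_sumr (reindex_inj (mulgI s^-1)%g); apply: eq_bigr => t _.
rewrite odd_permM odd_permV signr_addb -mulrA; congr (_ * _); congr (_ * _).
rewrite (reindex_inj (@perm_inj _ s)); apply: eq_bigr => i _.
by rewrite ffunE permM !permK.
Qed.

Lemma cspace_wedge (f : 'I_k -> 'rV[C]_n) : (cspace (wedge f) <= spanF f)%VS.
Proof.
apply: cspace_sub => a; rewrite sliceZ memvZ // slice_sum; apply: memv_suml => s _.
by rewrite sliceZ memvZ // slice_tprod memvZ // memF.
Qed.

Lemma srank_wedge (f : 'I_k -> 'rV[C]_n) : (srank (wedge f) <= k)%N.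
Proof. exact: srank_le_span (antisym_stable (@wedge_antisym f)) (cspace_wedge f). Qed.

Lemma antisym_perm (u : T) (c : midx n k) (s : 'S_k) :
  Defs.antisymmetric u -> u [ffun i => c (s i)] = (-1) ^+ odd_perm s * u c.
Proof.
move=> hu; have := congr1 (fun v : T => v c) (hu s^-1%g).
rewrite scaleTE ffunE odd_permV => <-; congr (u _).
by apply/ffunP => i; rewrite !ffunE invgK.
Qed.

Lemma antisym_rep (u : T) (c : midx n k) (i l : 'I_k) :
  Defs.antisymmetric u -> i != l -> c i = c l -> u c = 0.
Proof.
move=> hu hil hc; have := antisym_perm c (tperm i l) hu.
have -> : [ffun m => c (tperm i l m)] = c.
  by apply/ffunP => m; rewrite ffunE; case: (tpermP i l m) => [->|->|].
rewrite odd_tperm hil expr1 mulN1r => /eqP; rewrite -subr_eq0 opprK.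
by rewrite -mulr2n mulrn_eq0 /= => /eqP.
Qed.

(* Two antisymmetric tensors agreeing at b agree on all multi-indices with
   entries among those of b: such an index repeats an entry or permutes b. *)
Lemma antisym_agree (y z : T) (b c : midx n k) :
  Defs.antisymmetric y -> Defs.antisymmetric z -> y b = z b ->
  (forall i, c i \in codom b) -> y c = z c.
Proof.
move=> hy hz hb hc.
case: (boolP [exists i, exists l, (i != l) && (c i == c l)]).
  case/existsP => i /existsP [l /andP [hil /eqP hcl]].
  by rewrite (antisym_rep hy hil hcl) (antisym_rep hz hil hcl).
move=> hno; pose p i := iinv (hc i).
have hbp i : b (p i) = c i := f_iinv (hc i).
have ginj : injective p.
  move=> i l e; apply/eqP; apply: contraNT hno => hil; apply/existsP; exists i.
  by apply/existsP; exists l; rewrite hil -hbp -(hbp l) e eqxx.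
have -> : c = [ffun i => b (perm ginj i)].
  by apply/ffunP => i; rewrite ffunE permE hbp.
by rewrite !antisym_perm // hb.
Qed.

Lemma line_biorth (u : T) (b : midx n k) :
  Defs.antisymmetric u -> biorth (line u b) b (u b).
Proof.
move=> hu l m; case: eqP => [->|/eqP hlm]; first exact: line_at.
rewrite mxE; apply: (antisym_rep (i := l) (l := m)) => //.
by rewrite /upd !ffunE eqxx eq_sym (negbTE hlm).
Qed.

Lemma srank_antisym_pos (v : T) : Defs.antisymmetric v -> v != 0 -> (k <= srank v)%N.
Proof.
move=> hs /tensor_nz [b hb]; have hst := antisym_stable hs.
by apply: (biorth_srank_lower (line_biorth b hs) hb hst) => l; exact: line_in_cspace.
Qed.

Lemma simple_wedge (f : 'I_k -> 'rV[C]_n) : wedge f != 0 -> simple_antisym (wedge f).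
Proof.
move=> hf; split; [exact: wedge_antisym | exact: hf |].
by move=> v hs hv; apply: leq_trans (srank_wedge f) (srank_antisym_pos hs hv).
Qed.

(* Only the identity permutation contributes to the wedge of a biorthogonal
   family at b. *)
Lemma wedge_biorth (X : 'I_k -> 'rV[C]_n) (b : midx n k) (e : C) :
  biorth X b e -> wedge X b = (k`!%:R)^-1 * e ^+ k.
Proof.
move=> hX; rewrite wedgeE; congr (_ * _).
rewrite (bigD1 1%g) //= [X in _ + X]big1 => [|s hs].
  rewrite addr0 odd_perm1 expr0 mul1r (eq_bigr (fun _ => e)) => [|i _].
    by rewrite prodr_const card_ord.
  by rewrite perm1 hX eqxx.
have [i hi] : exists i, s i != i.
  apply/existsP; apply: contraNT hs; rewrite negb_exists => /forallP H.
  by apply/eqP/permP => i; rewrite perm1; apply/eqP; rewrite -[_ == _]negbK H.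
by rewrite (bigD1 i) //= hX (negbTE hi) mul0r mulr0.
Qed.

Lemma simple_antisym_wedge (y : T) : simple_antisym y ->
  exists f, wedge f != 0 /\ exists lam, lam != 0 /\ y = lam *: wedge f.
Proof.
case=> hs hy hmin; have [b hb] := tensor_nz hy.
have hst := antisym_stable hs.
set f := line y b; have hX : biorth f b (y b) := line_biorth b hs.
have hfb : wedge f b != 0.
  by rewrite (wedge_biorth hX) mulf_neq0 ?expf_neq0 // invr_eq0 pnatr_eq0 -lt0n fact_gt0.
have hf : wedge f != 0 by apply: contraNneq hfb => ->; rewrite ffunE.
have hsp : cspace y = spanF f.
  apply: (cspace_span hX hb hst) => [l|]; first exact: line_in_cspace.
  by apply: leq_trans (srank_wedge f); apply: hmin; [exact: wedge_antisym | exact: hf].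
pose lam := y b / wedge f b.
have Ey : y = lam *: wedge f.
  apply: (rigidity hX hb); first by rewrite hsp.
  - exact: subv_trans (cspaceZ _ _) (cspace_wedge f).
  - apply: antisym_stable => s.
    by rewrite permTB permTZ hs wedge_antisym scalerA mulrC -scalerA -scalerBr.
  - move=> c hc; apply: (antisym_agree hs _ _ hc); last by rewrite scaleTE divfK.
    exact/antisymZ/wedge_antisym.
exists f; split => //; exists lam; split => //.
by rewrite mulf_neq0 // invr_neq0.
Qed.

Lemma boson_eq (r : op C n k) : simple_boson_pure r <-> seg_sym_range r.
Proof.
split=> [[y [hy ->]]|[x [hx ->]]].
  have [x [hx [lam [hl ->]]]] := simple_sym_xpow hy.
  by exists x; rewrite rhoZ.
by exists (xpow k x); split; first exact: simple_xpow.
Qed.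

Lemma fermion_eq (r : op C n k) : simple_fermion_pure r <-> seg_wedge_range r.
Proof.
split=> [[y [hy ->]]|[f [hf ->]]].
  have [f [hf [lam [hl ->]]]] := simple_antisym_wedge hy.
  by exists f; rewrite rhoZ.
by exists (wedge f); split; first exact: simple_wedge.
Qed.

End Contraction.

Lemma conv_ext (C : numClosedFieldType) (n k : nat) (P Q : op C n k -> Prop) r :
  (forall x, P x <-> Q x) -> (conv P r <-> conv Q r).
Proof.
by move=> H; split=> [[m [c [p [h1 h2 h3 h4]]]]|[m [c [p [h1 h2 h3 h4]]]]];
  exists m, c, p; split=> // i; apply/H.
Qed.

Theorem mainTheorem1 (C : numClosedFieldType) (n k : nat) (hk : (2 <= k)%N) :
  [/\ (* (i) *)
      forall r : op C n k, boson_pure r ->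
        (~ simple_boson_pure r <-> ~ seg_sym_range r),
      (* (ii) *)
      forall r : op C n k, fermion_pure r ->
        (~ simple_fermion_pure r <-> ~ seg_wedge_range r),
      (* (iii), bosonic *)
      forall r : op C n k, boson_mixed r ->
        (~ conv (@simple_boson_pure C n k) r <-> ~ conv (@seg_sym_range C n k) r)
    & (* (iii), fermionic *)
      forall r : op C n k, fermion_mixed r ->
        (~ conv (@simple_fermion_pure C n k) r <-> ~ conv (@seg_wedge_range C n k) r)].
Proof.
case: k hk => [//|k'] _; split.
- by move=> r _; rewrite (boson_eq r).
- by move=> r _; rewrite (fermion_eq r).
- by move=> r _; rewrite (conv_ext r (@boson_eq C n k')).
- by move=> r _; rewrite (conv_ext r (@fermion_eq C n k')).
Qed.
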